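(* Let $b\ge2$, $n\ge1$ be integers, $\mathcal D=\{d,\dots,d+b-1\}$ a set of consecutive integers containing $0$, $s$ the minimal element and $m$ the size of $\Omega_n(b,\mathcal D)$, and $l=d/(b-1)$. Let $p=1/\{(n-1)(-l)\}$ if $(n-1)l\notin\mathbb Z$ and $p=1$ if $(n-1)l\in\mathbb Z$, where $\{x\}=x-\lfloor x\rfloor$. Then $(b-1)/p$ is a positive integer and for $0\le i,j\le m-1$, $$\tilde p_{i,j}=\frac{1}{b^n}\sum_{r=0}^{j}(-1)^r\binom{n+1}{r}\binom{n+b(j-r)+\frac{b-1}{p}-i}{n},$$ where $\binom{N}{n}=0$ for integers $0\le N<n$.
   Context: Carries process over $(b,\mathcal D)$: let $\{X_{k,i}\}_{1\le k\le n,\ i\ge 0}$ be independent random variables, each uniformly distributed on $\mathcal D$. Set $C_0=0$; for $i\ge 0$ let $A_i$ be the unique element of $\mathcal D$ with $A_i\equiv C_i+X_{1,i}+\dots+X_{n,i}\pmod b$, and set $C_{i+1}=(C_i+X_{1,i}+\dots+X_{n,i}-A_i)/b$. The state space $\Omega_n(b,\mathcal D)$ is the set of integers $c$ with $\Pr(C_i=c)>0$ for some $i\ge0$; it is a set of consecutive integers. $\tilde p_{i,j}=\Pr(C_{t+1}=j+s\mid C_t=i+s)$. *)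

From HB Require Import structures.
From mathcomp Require Import all_boot all_order all_algebra.
Set Implicit Arguments. Unset Strict Implicit. Unset Printing Implicit Defensive.
Import Order.TTheory GRing.Theory Num.Theory.
Local Open Scope ring_scope.

(* The digit set D = {d, ..., d+b-1}; a digit vector (X_1,...,X_n) in D^n is
   encoded as x : {ffun 'I_n -> 'I_b}, with X_k = d + x k.  Uniform
   independent digits = uniform x. *)
Definition digsum (b n : nat) (d : int) (x : {ffun 'I_n -> 'I_b}) : int :=
  \sum_(k < n) (d + (nat_of_ord (x k))%:Z).

Definition digitA (b : nat) (d c S : int) : int := d + ((c + S - d) %% b%:Z)%Z.

Definition carry (b : nat) (d c S : int) : int := ((c + S - digitA b d c S) %/ b%:Z)%Z.

(* Support of the carries process: reach k c  <->  Pr(C_k = c) > 0. *)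
Inductive reach (b n : nat) (d : int) : nat -> int -> Prop :=
| reach0 : reach b n d 0 0
| reachS k c (x : {ffun 'I_n -> 'I_b}) :
    reach b n d k c -> reach b n d k.+1 (carry b d c (digsum d x)).

Definition inOmega (b n : nat) (d c : int) : Prop := exists k, reach b n d k c.

Definition trans (b n : nat) (d c c' : int) : rat :=
  (#|[set x : {ffun 'I_n -> 'I_b} | carry b d c (digsum d x) == c']|)%:R
  / (b ^ n)%:R.

Definition fracpart (x : rat) : rat := x - (Num.floor x)%:~R.

(* binomial C(N, n) for an integer upper index N >= 0 (0 if N < 0, a case
   that never arises in the statement). *)
Definition binz (N : int) (n : nat) : nat :=
  if (0 <= N)%R then 'C(`|N|%N, n) else 0%N.

From HB Require Import structures.
From mathcomp Require Import all_boot all_order all_algebra.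
From mathcomp Require Import zify ring lra.
Import Order.TTheory GRing.Theory Num.Theory.
Local Open Scope ring_scope.

(* Write X_k = d + x_k with x_k uniform in {0..b-1}, D' = (n-1)d and B = b-1.
   1. From C_t = c the next carry is floor((c + nd + sum x - d) / b), so the
      transition count from c to c' is the number [window_count] of digit
      vectors x whose total lies in the window (Y - b, Y] with
      Y = c' b + B - c - D'  ([trans_window]).
   2. That number satisfies W_{n+1}(Y) = sum_{t<b} W_n(Y - t), and so does the
      inclusion-exclusion sum  K_n(Y) = sum_r (-1)^r C(n+1,r) C(Y - rb + n, n),
      thanks to the hockey-stick identity; hence W = K ([window_countE]).
   3. The smallest reachable carry is D' %/ B: this lower bound is preserved
      by every step, and all-minimal digits walk down to it ([min_carry]).
      So s = D' %/ B, and with e = D' %% B the index shift is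
      Y = jb + (B - e) - i.  The quantity (b-1)/p of the statement is the
      integer B - e ([period_value]); truncating K at r <= j gives the
      formula ([trans_formula]), which in fact holds for all i, j >= 0. *)

Lemma binz_small (N : int) k : N < k%:Z -> binz N k = 0%N.
Proof.
rewrite /binz; case: ifP => // N_ge0 N_lt; rewrite bin_small //.
by move: N_ge0 N_lt; case: N => // N _ /=; rewrite ltz_nat.
Qed.

(* Pascal's rule, valid for every integer N (both sides vanish for N < 0). *)
Lemma binzS (N : int) k : binz (N + 1) k.+1 = (binz N k.+1 + binz N k)%N.
Proof. by rewrite /binz; case: N => [N|[|N]] //=; rewrite addn1 binS. Qed.

Lemma binz0 (N : int) : binz N 0 = nat_of_bool (0 <= N).
Proof. by rewrite /binz; case: ifP => _; rewrite ?bin0. Qed.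

Lemma binz_hockey (Z : int) k a :
  \sum_(t < a) (binz (Z - t%:Z) k)%:R =
  (binz (Z + 1) k.+1)%:R - (binz (Z + 1 - a%:Z) k.+1)%:R :> rat.
Proof.
elim: a => [|a IH]; first by rewrite big_ord0 subr0 subrr.
rewrite big_ord_recr /= IH.
have -> : Z + 1 - a%:Z = (Z - a%:Z) + 1 by ring.
rewrite [binz (Z - a%:Z + 1) _]binzS natrD.
have -> : Z + 1 - a.+1%:Z = Z - a%:Z by rewrite -addn1 PoszD; ring.
ring.
Qed.

Lemma sum_ord_extend (g : nat -> rat) N M : (N <= M)%N ->
  (forall r, (N <= r)%N -> g r = 0) -> \sum_(r < N) g r = \sum_(r < M) g r.
Proof.
move=> leNM g0; rewrite (big_ord_widen _ _ leNM) big_mkcond.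
by apply: eq_bigr => r _; case: ltnP => // /g0 ->.
Qed.

(* K_n(Y): inclusion-exclusion count of the n-digit vectors with digits in
   {0..b-1} and total in the window (Y - b, Y]. *)
Definition ie_count (b n : nat) (Y : int) : rat :=
  \sum_(r < n.+2) (-1) ^+ r * ('C(n.+1, r))%:R *
     (binz (Y - (r * b)%:Z + n%:Z) n)%:R.

Lemma ie_count_rec b n Y :
  \sum_(t < b) ie_count b n (Y - t%:Z) = ie_count b n.+1 Y.
Proof.
rewrite /ie_count exchange_big /=.
set h := fun r : nat => (binz (Y - (r * b)%:Z + n.+1%:Z) n.+1)%:R : rat.
set c := fun r : nat => (-1) ^+ r * ('C(n.+1, r))%:R : rat.
have telescope : forall r : nat,
    \sum_(t < b) c r * (binz (Y - t%:Z - (r * b)%:Z + n%:Z) n)%:R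
    = c r * (h r - h r.+1).
  move=> r; rewrite -mulr_sumr; congr (_ * _).
  have shift (t : 'I_b) :
      Y - t%:Z - (r * b)%:Z + n%:Z = (Y - (r * b)%:Z + n%:Z) - t%:Z by ring.
  under eq_bigr => t _ do rewrite shift.
  by rewrite binz_hockey /h; congr (_%:R - _%:R); congr binz; lia.
under eq_bigr => r _ do rewrite telescope mulrBr.
(* Summation by parts, with Pascal's rule C(n+2, r+1) = C(n+1, r+1) + C(n+1, r). *)
have top0 : \sum_(r < n.+3) c r * h r = \sum_(r < n.+2) c r * h r.
  by rewrite big_ord_recr /= /c bin_small // mulr0 mul0r addr0.
rewrite sumrB -top0 big_ord_recl [RHS]big_ord_recl /=.
have bumpE (i : nat) : bump 0 i = i.+1 by [].
under [in RHS]eq_bigr => r _ do rewrite bumpE binS natrD mulrDr mulrDl.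
under [in LHS]eq_bigr => r _ do rewrite bumpE.
rewrite big_split /= !addrA /c expr0 !mul1r.
rewrite -sumrN; congr (_ + _ + _); apply: eq_bigr => r _; rewrite /h //.
by rewrite exprS; ring.
Qed.

(* If Q < b, the terms r > j of K(jb + Q) vanish, giving the sum over r <= j. *)
Lemma ie_count_trunc b n (j : nat) (Q : int) : Q < b%:Z ->
  ie_count b n ((j * b)%:Z + Q) =
  \sum_(r < j.+1) (-1) ^+ r * ('C(n.+1, r))%:R *
     (binz (n%:Z + b%:Z * (j - r)%:Z + Q) n)%:R.
Proof.
move=> Q_lt.
pose g r : rat := (-1) ^+ r * ('C(n.+1, r))%:R *
  (binz ((j * b)%:Z + Q - (r * b)%:Z + n%:Z) n)%:R.
have -> : \sum_(r < j.+1) (-1) ^+ r * ('C(n.+1, r))%:R *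
     (binz (n%:Z + b%:Z * (j - r)%:Z + Q) n)%:R = \sum_(r < j.+1) g r.
  apply: eq_bigr => r _; rewrite /g; congr (_ * _%:R); congr binz.
  have le_rj : (r <= j)%N by rewrite -ltnS.
  have -> : (j - r)%:Z = j%:Z - r%:Z by lia.
  rewrite (PoszM j b) (PoszM r b); lia.
rewrite /ie_count -/g (@sum_ord_extend g n.+2 (n.+2 + j.+1)); last 2 first.
- by rewrite leq_addr.
- by move=> r r_gt; rewrite /g bin_small // mulr0 mul0r.
rewrite [RHS](@sum_ord_extend g j.+1 (n.+2 + j.+1)) //; first by rewrite leq_addl.
move=> r r_gt; rewrite /g binz_small ?mulr0 //.
have : (j.+1 * b <= r * b)%N by rewrite leq_mul2r r_gt orbT.
rewrite !PoszM; lia.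
Qed.

(* Prepending an entry to a vector; with its inverse [fsplit] this identifies
   T^(n+1) with T * T^n, so sums over digit vectors can be peeled digit by digit. *)
Definition fcons (T : Type) n (t : T) (y : {ffun 'I_n -> T}) : {ffun 'I_n.+1 -> T} :=
  [ffun i => if unlift ord0 i is Some j then y j else t].
Definition fsplit (T : Type) n (x : {ffun 'I_n.+1 -> T}) : T * {ffun 'I_n -> T} :=
  (x ord0, [ffun j => x (lift ord0 j)]).
Arguments fcons {T n}.
Arguments fsplit {T n}.

Lemma fconsK (T : Type) n :
  cancel (fun p : T * {ffun 'I_n -> T} => fcons p.1 p.2) (@fsplit T n).
Proof.
case=> t y; rewrite /fsplit /fcons /= ffunE unlift_none; congr pair.
by apply/ffunP => j; rewrite !ffunE liftK.
Qed.

Lemma fsplitK (T : Type) n : cancel (@fsplit T n) (fun p => fcons p.1 p.2).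
Proof.
move=> x; apply/ffunP => i; rewrite /fsplit /fcons /= ffunE.
by case: unliftP => [j ->|->]; rewrite ?ffunE.
Qed.

Lemma sum_ffun_cons (T : finType) n (F : {ffun 'I_n.+1 -> T} -> nat) :
  (\sum_x F x = \sum_(t : T) \sum_(y : {ffun 'I_n -> T}) F (fcons t y))%N.
Proof.
rewrite pair_big /= (reindex (fun p : T * {ffun 'I_n -> T} => fcons p.1 p.2)) //.
exact/onW_bij/(Bijective (@fconsK T n) (@fsplitK T n)).
Qed.

Definition digit_total {b n} (x : {ffun 'I_n -> 'I_b}) : nat := (\sum_(k < n) (x k : nat))%N.

Lemma digit_total_cons b n t (y : {ffun 'I_n -> 'I_b}) :
  digit_total (fcons t y) = (t + digit_total y)%N.
Proof.
rewrite /digit_total big_ord_recl /fcons ffunE unlift_none; congr addn.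
by apply: eq_bigr => j _; rewrite ffunE liftK.
Qed.

Definition window_count b n (Y : int) : nat :=
  (\sum_(x : {ffun 'I_n -> 'I_b})
     nat_of_bool ((Y - b%:Z < (digit_total x)%:Z)%R && ((digit_total x)%:Z <= Y)%R))%N.

Lemma window_count_rec b n Y :
  window_count b n.+1 Y = (\sum_(t < b) window_count b n (Y - t%:Z))%N.
Proof.
rewrite /window_count sum_ffun_cons; apply: eq_bigr => t _; apply: eq_bigr => y _.
by rewrite digit_total_cons; congr nat_of_bool; apply/idP/idP; lia.
Qed.

Lemma window_countE b n Y : (window_count b n Y)%:R = ie_count b n Y.
Proof.
elim: n Y => [|n IH] Y; last first.
  by rewrite window_count_rec natr_sum -ie_count_rec; apply: eq_bigr => t _.
have total0 (x : {ffun 'I_0 -> 'I_b}) : digit_total x = 0%N.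
  by rewrite /digit_total big_ord0.
rewrite /window_count /ie_count.
under eq_bigr => x _ do rewrite total0.
rewrite sum_nat_const card_ffun !card_ord expn0 mul1n.
rewrite !big_ord_recl big_ord0 /= !binz0 expr0 expr1 bin0 bin1 /bump /=.
rewrite !mul1n !mul1r mulN1r subr0 !addr0.
case: (lerP 0 (Y - b%:Z)) => Yb; case: (lerP 0 Y) => Y0 /=; rewrite ?subrr ?subr0 //.
by exfalso; lia.
Qed.

Lemma carryE b d c S : (0 < b)%N -> carry b d c S = ((c + S - d) %/ b%:Z)%Z.
Proof.
move=> b_gt0; rewrite /carry /digitA.
have -> : c + S - (d + ((c + S - d) %% b%:Z)%Z) = ((c + S - d) %/ b%:Z)%Z * b%:Z.
  set z := c + S - d; transitivity (z - (z %% b%:Z)%Z); first by rewrite /z; ring.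
  by rewrite {1}(divz_eq z b%:Z); ring.
by rewrite mulzK // eqz_nat -lt0n.
Qed.

Lemma digsumE b n d (x : {ffun 'I_n -> 'I_b}) :
  digsum d x = d *+ n + (digit_total x)%:Z.
Proof.
rewrite /digsum big_split /= sumr_const card_ord; congr (_ + _).
by rewrite /digit_total (big_morph _ PoszD (erefl (Posz 0))).
Qed.

Lemma trans_window b n d c c' : (0 < b)%N ->
  trans b n d c c' =
  (window_count b n (c' * b%:Z + b%:Z - 1 - c - (d *+ n - d)))%:R / (b ^ n)%:R.
Proof.
move=> b_gt0; rewrite /trans; congr (_%:R / _).
rewrite -sum1_card big_mkcond /window_count; apply: eq_bigr => x _.
rewrite inE carryE // digsumE eq_le lez_divRL ?ltz_nat //.
set z := c + _ - d.
rewrite (_ : ((z %/ b%:Z)%Z <= c') = (z < (c' + 1) * b%:Z)); last first.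
  by rewrite -ltz_divLR ?ltz_nat // ltzD1.
have indicator (u : bool) : (if u then 1 else 0)%N = u by case: u.
by rewrite indicator /z; congr nat_of_bool; apply/idP/idP; lia.
Qed.

Section CarrySupport.
Variables (b n : nat) (d sigma : int).
Hypotheses (b_gt1 : (1 < b)%N) (d_le0 : d <= 0).

Lemma reach_lower_bound : (1 <= n)%N -> sigma * (b%:Z - 1) <= d *+ n - d ->
  forall k c, reach b n d k c -> sigma <= c.
Proof.
move=> n_ge1 sigma_le k c; elim => [|k' c' x _ IH].
  have : d *+ n - d <= 0.
    rewrite (_ : d *+ n - d = d * (n%:Z - 1)); last by rewrite -mulr_natr natz; ring.
    by apply: mulr_le0_ge0 => //; lia.
  nia.
rewrite carryE; last by lia.
by rewrite lez_divRL ?ltz_nat ?digsumE; lia.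
Qed.

(* If moreover (n-1)d < (sigma+1)(b-1), sigma itself is reached: from any
   carry c > sigma, the all-minimal digit vector strictly lowers the carry. *)
Lemma reach_minimum : (forall k c, reach b n d k c -> sigma <= c) ->
  d *+ n - d < (sigma + 1) * (b%:Z - 1) -> exists k, reach b n d k sigma.
Proof.
move=> lb up.
have b_gt0 : (0 < b)%N by lia.
pose x0 : {ffun 'I_n -> 'I_b} := [ffun => Ordinal b_gt0].
have total_x0 : digit_total x0 = 0%N by rewrite /digit_total big1 // => k _; rewrite ffunE.
suff descend : forall N c k, reach b n d k c -> c - sigma <= N%:Z ->
    exists k', reach b n d k' sigma.
  apply: (descend `|0 - sigma|%N 0 0%N (reach0 _ _ _)).
  have := lb _ _ (reach0 b n d); lia.
elim => [|N IH] c k reach_c c_le.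
  have := lb _ _ reach_c => sigma_le.
  have -> : sigma = c by lia.
  by exists k.
have := lb _ _ reach_c; rewrite le_eqVlt => /orP [/eqP ->|lt_c]; first by exists k.
apply: (IH _ k.+1 (reachS x0 reach_c)).
have grow : (sigma + 1) * (b%:Z - 1) <= c * (b%:Z - 1) by apply: ler_wpM2r; lia.
have : carry b d c (digsum d x0) < c.
  by rewrite carryE // ltz_divLR ?ltz_nat // digsumE total_x0; lia.
lia.
Qed.

End CarrySupport.

Lemma min_carry b n d s : (1 < b)%N -> (1 <= n)%N -> d <= 0 ->
  inOmega b n d s -> (forall c, inOmega b n d c -> s <= c) ->
  s = ((d *+ n - d) %/ (b%:Z - 1))%Z.
Proof.
move=> b_gt1 n_ge1 d_le0 [k reach_s] s_min.
set D := d *+ n - d; set B := b%:Z - 1; set sigma := (D %/ B)%Z.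
have B_gt0 : 0 < B by rewrite /B; lia.
have Ddiv := divz_eq D B.
have e_ge0 := modz_ge0 D (lt0r_neq0 B_gt0).
have e_lt := ltz_pmod D B_gt0.
have lb : forall k c, reach b n d k c -> sigma <= c.
  by apply: reach_lower_bound => //; lia.
have [k' reach_sigma] : exists k, reach b n d k sigma.
  by apply: reach_minimum => //; lia.
have := s_min _ (ex_intro _ k' reach_sigma); have := lb _ _ reach_s; lia.
Qed.

(* With B = b-1 and e = (n-1)d %% B, the quantity (b-1)/p equals B - e. *)
Definition period (b n : nat) (d : int) : nat :=
  `|((b%:Z - 1) - ((d *+ n - d) %% (b%:Z - 1))%Z)%R|%N.

Lemma period_gt0 b n d : (1 < b)%N -> (0 < period b n d)%N.
Proof.
move=> b_gt1; have B_gt0 : 0 < b%:Z - 1 by lia.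
by have := ltz_pmod (d *+ n - d) B_gt0; rewrite /period; lia.
Qed.

(* Writing (n-1) l = sigma + t with sigma = (n-1)d %/ B and t = e/B in [0,1):
   either t = 0 = e and p = 1, or {-(n-1) l} = 1 - t and (b-1)/p = B - e. *)
Lemma period_value b n d : (1 < b)%N ->
  let l : rat := d%:~R / (b%:R - 1) in
  let p : rat := if (n%:R - 1) * l \is a Num.int then 1
                 else 1 / fracpart ((n%:R - 1) * (- l)) in
  (b%:R - 1) / p = (period b n d)%:R.
Proof.
move=> b_gt1 l p.
set D := d *+ n - d; set B := b%:Z - 1; set sigma := (D %/ B)%Z; set e := (D %% B)%Z.
have B_gt0 : 0 < B by rewrite /B; lia.
have e_ge0 : 0 <= e := modz_ge0 D (lt0r_neq0 B_gt0).
have e_lt : e < B := ltz_pmod D B_gt0.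
have Br : B%:~R = b%:R - 1 :> rat by rewrite /B intrB.
have Br0 : (b%:R - 1 : rat) != 0 by rewrite -Br intr_eq0 lt0r_neq0.
have periodE : (period b n d)%:R = (B - e)%:~R :> rat.
  by rewrite -[_%:R]/((period b n d)%:Z%:~R) /period gez0_abs //; lia.
set t : rat := e%:~R / (b%:R - 1).
have nl : (n%:R - 1) * l = sigma%:~R + t.
  rewrite /l /t mulrA -Br.
  have -> : (n%:R - 1) * d%:~R = D%:~R :> rat.
    by rewrite /D intrB rmorphMn /= -mulr_natr; ring.
  by rewrite {1}(divz_eq D B) intrD intrM; field; rewrite Br.
have t_ge0 : 0 <= t by rewrite divr_ge0 ?ler0z // -Br ler0z ltW.
have t_lt1 : t < 1 by rewrite ltr_pdivrMr -?Br ?ltr0z // mul1r ltr_int.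
rewrite /p nl periodE intrB Br; case: ifP => [nl_int|nl_nint].
  (* t is an integer in [0, 1), hence e = 0 *)
  have t_int : t \is a Num.int.
    by rewrite (_ : t = (sigma%:~R + t) - sigma%:~R) ?rpredB ?intr_int //; ring.
  have t0 : t = 0.
    have [z tz] := intrP t_int; move: t_ge0 t_lt1; rewrite tz ler0z ltrz1 => ? ?.
    by have -> : z = 0 by lia.
  have -> : e = 0.
    by move/eqP: t0; rewrite /t mulf_eq0 invr_eq0 (negPf Br0) orbF intr_eq0 => /eqP.
  by rewrite divr1 subr0.
(* t > 0, so floor(-(n-1) l) = -sigma - 1 and (b-1)/p = (b-1)(1-t) = B - e *)
have t_gt0 : 0 < t.
  rewrite lt_def t_ge0 andbT; apply: contraFN nl_nint => /eqP ->.
  by rewrite addr0 intr_int.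
have floorE : Num.floor (- (sigma%:~R + t)) = - sigma - 1.
  by apply: floor_def; rewrite subrK intrB intrN; apply/andP; split; lra.
rewrite mulrN nl /fracpart floorE div1r invrK intrB intrN /t; field; exact: Br0.
Qed.

Lemma trans_formula b n d s (i j : nat) : (1 < b)%N ->
  s = ((d *+ n - d) %/ (b%:Z - 1))%Z ->
  trans b n d (i%:Z + s) (j%:Z + s) =
  1 / (b ^ n)%:R *
  \sum_(r < j.+1) (-1) ^+ r * ('C(n.+1, r))%:R *
     (binz (n%:Z + b%:Z * (j - r)%:Z + (period b n d)%:Z - i%:Z) n)%:R.
Proof.
move=> b_gt1 sE.
set D := d *+ n - d; set B := b%:Z - 1.
have B_gt0 : 0 < B by rewrite /B; lia.
have e_ge0 := modz_ge0 D (lt0r_neq0 B_gt0).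
have e_lt := ltz_pmod D B_gt0.
have periodE : (period b n d)%:Z = B - (D %% B)%Z.
  by rewrite /period -/D -/B gez0_abs //; lia.
have Ddiv := divz_eq D B; rewrite -sE in Ddiv.
rewrite trans_window; last by lia.
rewrite window_countE [RHS]mulrC mul1r; congr (_ / _).
under eq_bigr => r _ do rewrite -addrA.
rewrite -ie_count_trunc; last by lia.
by congr ie_count; rewrite PoszM -/D; lia.
Qed.

Theorem lemma2 (b n : nat) (d s : int) (m : nat)
  (hb : (2 <= b)%N) (hn : (1 <= n)%N)
  (hD : d <= 0 <= d + b%:Z - 1)
  (hs : inOmega b n d s) (hsmin : forall c, inOmega b n d c -> s <= c)
  (hm : exists l : seq int,
          [/\ uniq l, forall c, c \in l <-> inOmega b n d c & size l = m]) :
  let l : rat := d%:~R / (b%:R - 1) in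
  let p : rat := if (n%:R - 1) * l \is a Num.int then 1
                 else 1 / fracpart ((n%:R - 1) * (- l)) in
  exists q : nat, (0 < q)%N /\ (b%:R - 1) / p = q%:R /\
    forall i j : nat, (i < m)%N -> (j < m)%N ->
      trans b n d (i%:Z + s) (j%:Z + s) =
      1 / (b ^ n)%:R *
      \sum_(r < j.+1) (-1) ^+ r * ('C(n.+1, r))%:R *
         (binz (n%:Z + b%:Z * (j - r)%:Z + q%:Z - i%:Z) n)%:R.
Proof.
move=> l p.
have d_le0 : d <= 0 by case/andP: hD.
have sE := @min_carry b n d s hb hn d_le0 hs hsmin.
exists (period b n d); split; first exact: period_gt0.
split; first exact: (@period_value b n d hb).
by move=> i j _ _; apply: (@trans_formula b n d s i j hb sE).
Qed.
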